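(* Let $\alpha\in\mathbb{R}$, let $\mathbb{Q}[x]^+_{x=\alpha}=\{p\in\mathbb{Q}[x]: p(\alpha)>0\}$, and suppose $\mathbb{Q}[x]^+_{x=\alpha}=H_1\sqcup H_2$ with $H_1,H_2$ disjoint subsets, each closed under addition and multiplication. If, for some $j\in\{1,2\}$, every polynomial of degree $1$ in $\mathbb{Q}[x]^+_{x=\alpha}$ belongs to $H_j$, then $H_j=\mathbb{Q}[x]^+_{x=\alpha}$. *)

From HB Require Import structures.
From mathcomp Require Import all_boot all_order all_algebra.
From mathcomp Require Import reals.
Set Implicit Arguments. Unset Strict Implicit. Unset Printing Implicit Defensive.
Import Order.TTheory GRing.Theory Num.Theory.
Local Open Scope ring_scope.

Definition posAt (R : realType) (alpha : R) (p : {poly rat}) : Prop :=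
  0 < (map_poly (ratr : rat -> R) p).[alpha].

Definition add_mul_closed (H : {poly rat} -> Prop) : Prop :=
  (forall p q, H p -> H q -> H (p + q)) /\ (forall p q, H p -> H q -> H (p * q)).

From HB Require Import structures.
From mathcomp Require Import all_boot all_order all_algebra.
From mathcomp Require Import reals.
From mathcomp Require Import ring lra.
Import Order.TTheory GRing.Theory Num.Theory.
Local Open Scope ring_scope.

(* Only the closure of H_j under + and * matters.  A positive constant c is
   the sum (X - t) + (c + t - X) of two linear polynomials positive at alpha,
   for rational t in (alpha - c, alpha).  In higher degree write
   p = p(a) + (X - a) s with rational a < alpha, and pick a rational K strictly
   between -s(alpha) and p(a) / (alpha - a); then
     p = (p(a) - K (X - a)) + (X - a) (s + K),
   where p(a) - K (X - a), X - a and s + K are all positive at alpha and s + K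
   is smaller than p, so induction on the size of p concludes. *)

Lemma ratr_between {R : archiRealFieldType} (x y : R) :
  x < y -> exists q : rat, x < ratr q < y.
Proof. by move=> /rat_in_itvoo [q]; rewrite in_itv /=; exists q. Qed.

Lemma size_divXsubC_addC {F : fieldType} (p : {poly F}) (a k : F) :
  (1 < size p)%N -> (size (p %/ ('X - a%:P) + k%:P)%R < size p)%N.
Proof.
move=> p_gt1; rewrite (leq_ltn_trans (size_polyD _ _)) // gtn_max.
rewrite size_divp ?polyXsubC_eq0 // size_XsubC (leq_ltn_trans (size_polyC_leq1 _)) //.
by rewrite ltn_subrL (ltnW p_gt1).
Qed.

Section PositiveCone.
Variables (R : realType) (alpha : R).

Definition hornerQ (p : {poly rat}) : R := (map_poly ratr p).[alpha].

Lemma hornerQD p q : hornerQ (p + q) = hornerQ p + hornerQ q.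
Proof. by rewrite /hornerQ rmorphD hornerD. Qed.

Lemma hornerQM p q : hornerQ (p * q) = hornerQ p * hornerQ q.
Proof. by rewrite /hornerQ rmorphM hornerM. Qed.

Lemma hornerQN p : hornerQ (- p) = - hornerQ p.
Proof. by rewrite /hornerQ rmorphN hornerN. Qed.

Lemma hornerQZ k p : hornerQ (k *: p) = ratr k * hornerQ p.
Proof. by rewrite /hornerQ map_polyZ hornerZ. Qed.

Lemma hornerQC c : hornerQ c%:P = ratr c.
Proof. by rewrite /hornerQ map_polyC hornerC. Qed.

Lemma hornerQX : hornerQ 'X = alpha.
Proof. by rewrite /hornerQ map_polyX hornerX. Qed.

Definition hornerQE := (hornerQD, hornerQM, hornerQN, hornerQZ, hornerQC, hornerQX).

Lemma posAtE p : posAt alpha p = (0 < hornerQ p).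
Proof. by []. Qed.

Variable H : {poly rat} -> Prop.
Hypothesis H_closed : add_mul_closed H.
Hypothesis H_linear : forall p : {poly rat}, size p = 2%N -> posAt alpha p -> H p.

Lemma H_XsubC a : ratr a < alpha -> H ('X - a%:P).
Proof.
move=> a_lt; apply: H_linear; first exact: size_XsubC.
by rewrite posAtE !hornerQE; lra.
Qed.

Lemma H_polyC c : 0 < ratr c :> R -> H c%:P.
Proof.
move=> c_gt0; have [t /andP [t_gt t_lt]] := ratr_between (alpha - ratr c) alpha ltac:(lra).
have -> : c%:P = ('X - t%:P) + - ('X - (c + t)%:P) by rewrite polyCD; ring.
apply: (proj1 H_closed); first exact: H_XsubC.
apply: H_linear; first by rewrite size_polyN size_XsubC.
by rewrite posAtE !hornerQE rmorphD; lra.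
Qed.

Lemma H_size_le2 (p : {poly rat}) : (size p <= 2)%N -> posAt alpha p -> H p.
Proof.
rewrite leq_eqVlt ltnS => /orP [/eqP /H_linear // | /size1_polyC ->].
by rewrite posAtE hornerQC => /H_polyC.
Qed.

Lemma H_posAt (p : {poly rat}) : posAt alpha p -> H p.
Proof.
elim: {p}(size p).+1 {-2}p (ltnSn (size p)) => // n IH p p_lt pos.
have [p_le2 | p_gt2] := leqP (size p) 2; first exact: H_size_le2.
have [a /andP [_ a_lt]] := ratr_between (alpha - 1) alpha ltac:(lra).
set s := p %/ ('X - a%:P); set c := p.[a].
have p_eq : p = s * ('X - a%:P) + c%:P by rewrite /s /c -modp_XsubC -divp_eq.
have da_gt0 : 0 < alpha - ratr a by lra.
have sK_bound : - hornerQ s < ratr c / (alpha - ratr a).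
  by rewrite ltr_pdivlMr //; move: pos; rewrite posAtE {1}p_eq !hornerQE; nra.
have [K /andP [K_gt K_lt]] := ratr_between _ _ sK_bound.
rewrite ltr_pdivlMr // in K_lt.
have -> : p = (c%:P - K *: ('X - a%:P)) + ('X - a%:P) * (s + K%:P).
  by rewrite -mul_polyC {1}p_eq; ring.
apply: (proj1 H_closed).
  apply: H_size_le2; last by rewrite posAtE !hornerQE; lra.
  rewrite (leq_trans (size_polyD _ _)) // geq_max size_polyN.
  by rewrite (leq_trans (size_polyC_leq1 _)) // (leq_trans (size_scale_leq _ _)) ?size_XsubC.
apply: (proj2 H_closed); first exact: H_XsubC.
apply: IH; last by rewrite posAtE !hornerQE; lra.
by rewrite (leq_trans (size_divXsubC_addC p a K (ltnW p_gt2))).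
Qed.

End PositiveCone.

Theorem lemma4p3 (R : realType) (alpha : R) (H1 H2 : {poly rat} -> Prop) :
  (forall p, posAt alpha p <-> (H1 p \/ H2 p)) ->
  (forall p, ~ (H1 p /\ H2 p)) ->
  add_mul_closed H1 -> add_mul_closed H2 ->
  forall j : bool, let Hj := if j then H1 else H2 in
  (forall p : {poly rat}, size p = 2%N -> posAt alpha p -> Hj p) ->
  forall p, Hj p <-> posAt alpha p.
Proof.
move=> union _ closed1 closed2 j Hj Hj_linear p; split.
  by rewrite /Hj; case: j {Hj Hj_linear} => Hp; apply/union; [left | right].
have Hj_closed : add_mul_closed Hj by rewrite /Hj; case: j {Hj Hj_linear}.
exact: H_posAt Hj_closed Hj_linear p.
Qed.
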